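(* Let $n\ge2$ and let $A$ be the generalized Cartan matrix of affine type $A_n^{(1)}$: $I=\mathbb Z/(n+1)\mathbb Z$, $a_{\bar i,\bar i}=2$, $a_{\bar i,\overline{i+1}}=a_{\bar i,\overline{i-1}}=-1$, and all other entries $0$. Then the set of quantum roots is exactly $$\mathcal Q(\Phi_+)=\Big\{\textstyle\sum_{t=0}^{l}\alpha_{\overline{k+t}}\ \Big|\ k\in\mathbb Z/(n+1)\mathbb Z,\ 0\le l\le n-1\Big\},$$ i.e. the sums of simple roots over proper nonempty cyclic intervals of $\mathbb Z/(n+1)\mathbb Z$.
   Context: Kac–Moody root datum $(A,X,Y,(\alpha_i)_{i\in I},(\alpha_i^\vee)_{i\in I})$: free $\mathbb Z$-modules $X,Y$ of finite rank with perfect pairing, linearly independent simple roots $(\alpha_i)\subset X$ and coroots $(\alpha_i^\vee)\subset Y$, $\langle\alpha_i^\vee,\alpha_j\rangle=a_{i,j}$. Simple reflections $r_i(x)=x-\langle\alpha_i^\vee,x\rangle\alpha_i$, $r_i(y)=y-\langle y,\alpha_i\rangle\alpha_i^\vee$, $W^v=\langle r_i\rangle$, real roots $\Phi=W^v\{\alpha_i\}$, $\Phi_+=\Phi\cap\bigoplus\mathbb Z_{\ge0}\alpha_i$; coroot $\beta^\vee=w(\alpha_i^\vee)$, $s_\beta=wr_iw^{-1}$ for $\beta=w(\alpha_i)$. $\mathrm{Inv}(w)=\{\alpha\in\Phi_+\mid w\alpha\in\Phi_-\}$; $\beta\in\Phi_+$ is quantum if $\langle\beta^\vee,\gamma\rangle=1$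 for all $\gamma\in\mathrm{Inv}(s_\beta)\setminus\{\beta\}$. *)

(* Concrete model of the real roots / coroots of a
   Kac-Moody root datum with generalized Cartan matrix A, in coordinates
   w.r.t. the simple roots (resp. simple coroots). *)
From mathcomp Require Import all_boot all_order all_algebra.
Set Implicit Arguments. Unset Strict Implicit. Unset Printing Implicit Defensive.
Import GRing.Theory Num.Theory.
Local Open Scope ring_scope.

Section RootDatum.
Variables (m : nat) (A : 'M[int]_m).

Definition sroot (i : 'I_m) : 'rV[int]_m := delta_mx 0 i.
Definition scoroot (i : 'I_m) : 'rV[int]_m := delta_mx 0 i.

(* <y, x> for y in the coroot lattice, x in the root lattice:
   <alpha_i^vee, alpha_j> = a_{i,j}, extended bilinearly *)
Definition pairing (y x : 'rV[int]_m) : int :=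
  \sum_(i < m) \sum_(j < m) y 0 i * A i j * x 0 j.

Definition reflX (i : 'I_m) (x : 'rV[int]_m) : 'rV[int]_m :=
  x - pairing (scoroot i) x *: sroot i.
Definition reflY (i : 'I_m) (y : 'rV[int]_m) : 'rV[int]_m :=
  y - pairing y (sroot i) *: scoroot i.

(* the word w = [:: i1; ...; ik] stands for r_{i1} ... r_{ik} in W^v *)
Definition actX (w : seq 'I_m) (x : 'rV[int]_m) := foldr reflX x w.
Definition actY (w : seq 'I_m) (y : 'rV[int]_m) := foldr reflY y w.

Definition is_root (x : 'rV[int]_m) : Prop :=
  exists (w : seq 'I_m) (i : 'I_m), x = actX w (sroot i).
Definition pos_root (x : 'rV[int]_m) : Prop :=
  is_root x /\ forall i, 0 <= x 0 i.
Definition neg_root (x : 'rV[int]_m) : Prop :=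
  is_root x /\ forall i, x 0 i <= 0.

(* beta in Phi_+ is quantum if for every presentation beta = w(alpha_i)
   (with beta^vee = w(alpha_i^vee), s_beta = w r_i w^{-1}) and every
   gamma in Inv(s_beta) \ {beta}, <beta^vee, gamma> = 1. *)
Definition quantum (beta : 'rV[int]_m) : Prop :=
  pos_root beta /\
  forall (w : seq 'I_m) (i : 'I_m), beta = actX w (sroot i) ->
    forall gamma, pos_root gamma ->
      neg_root (actX (w ++ i :: rev w) gamma) ->
      gamma <> beta ->
      pairing (actY w (scoroot i)) gamma = 1.

End RootDatum.

Definition affA (n : nat) : 'M[int]_n.+1 :=
  \matrix_(i, j)
    if i == j then (2 : int)
    else if ((j : nat) == (i.+1 %% n.+1)%N) || ((i : nat) == (j.+1 %% n.+1)%N)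
    then (-1 : int) else (0 : int).

From mathcomp Require Import all_boot all_order all_algebra zify ring.
Set Implicit Arguments. Unset Strict Implicit. Unset Printing Implicit Defensive.
Import Order.TTheory GRing.Theory Num.Theory.
Local Open Scope ring_scope.

(* For a symmetric Cartan matrix the coroot of a root is the root itself,
   every root has norm <beta, beta> = 2, and s_beta(gamma) = gamma - <beta, gamma> beta.
   For A_n^(1) the form is <x, x> = sum_i (x_(i+1) - x_i)^2, so a vector of norm 2
   is h delta + alpha_J with delta = sum_i alpha_i, h an integer and J a proper
   cyclic interval.  A positive root with h >= 1 is not quantum: gamma = alpha_J
   has <beta, gamma> = 2 and s_beta(gamma) = - alpha_J - 2 h delta < 0.
   Conversely, let beta = alpha_J and gamma a positive root with s_beta(gamma) < 0.
   Then <beta, gamma> >= 1, as otherwise s_beta(gamma) = gamma - <beta, gamma> beta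
   would be >= 0, and <gamma - beta, gamma - beta> = 4 - 2 <beta, gamma> >= 0.
   Finally <beta, gamma> = 2 would force gamma - beta in Z delta, which vanishes
   at an index outside J. *)

Section SymmetricCartan.
Variables (m : nat) (A : 'M[int]_m).
Hypothesis A_sym : forall i j, A i j = A j i.
Hypothesis A_diag : forall i, A i i = 2.

Lemma pairingC y x : pairing A y x = pairing A x y.
Proof.
rewrite /pairing exchange_big; apply: eq_bigr => i _; apply: eq_bigr => j _.
by rewrite A_sym; ring.
Qed.

Lemma pairingDr y x1 x2 : pairing A y (x1 + x2) = pairing A y x1 + pairing A y x2.
Proof.
rewrite /pairing -big_split; apply: eq_bigr => i _; rewrite -big_split /=.
by apply: eq_bigr => j _; rewrite mxE mulrDr.
Qed.

Lemma pairingZr y c x : pairing A y (c *: x) = c * pairing A y x.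
Proof.
rewrite /pairing mulr_sumr; apply: eq_bigr => i _; rewrite mulr_sumr.
by apply: eq_bigr => j _; rewrite mxE; ring.
Qed.

Lemma pairingBr y x1 x2 : pairing A y (x1 - x2) = pairing A y x1 - pairing A y x2.
Proof. by rewrite pairingDr -scaleN1r pairingZr mulN1r. Qed.

Lemma pairingZl c y x : pairing A (c *: y) x = c * pairing A y x.
Proof. by rewrite pairingC pairingZr pairingC. Qed.

Lemma pairingBl y1 y2 x : pairing A (y1 - y2) x = pairing A y1 x - pairing A y2 x.
Proof. by rewrite pairingC pairingBr !(pairingC x). Qed.

Lemma pairingBB x y :
  pairing A (x - y) (x - y) = pairing A x x - 2 * pairing A x y + pairing A y y.
Proof. by rewrite pairingBl !pairingBr (pairingC y x); ring. Qed.

Lemma pairing_srootl i x : pairing A (sroot i) x = \sum_j A i j * x 0 j.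
Proof.
rewrite /pairing (bigD1 i) //= [X in _ + X]big1 ?addr0.
  by apply: eq_bigr => j _; rewrite mxE !eqxx mul1r.
move=> k /negbTE ki; apply: big1 => j _.
by rewrite mxE eqxx ki !mul0r.
Qed.

Lemma pairing_sroot i j : pairing A (sroot i) (sroot j) = A i j.
Proof.
rewrite pairing_srootl (bigD1 j) //= big1 ?addr0; first by rewrite mxE !eqxx mulr1.
by move=> k /negbTE kj; rewrite mxE eqxx kj mulr0.
Qed.

Lemma actY_scoroot w i : actY A w (scoroot i) = actX A w (sroot i).
Proof. by elim: w => //= a w IH; rewrite IH /reflY /reflX pairingC. Qed.

Lemma reflXK i : involutive (reflX A i).
Proof.
move=> x; rewrite /reflX pairingBr pairingZr pairing_sroot A_diag.
by apply/matrixP => a b; rewrite !mxE; ring.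
Qed.

Lemma reflX_subZ i x c y : reflX A i (x - c *: y) = reflX A i x - c *: reflX A i y.
Proof.
rewrite /reflX pairingBr pairingZr.
by apply/matrixP => a b; rewrite !mxE; ring.
Qed.

Lemma actX_subZ w x c y : actX A w (x - c *: y) = actX A w x - c *: actX A w y.
Proof. by elim: w => //= a w IH; rewrite IH reflX_subZ. Qed.

Lemma pairing_reflX i x y : pairing A (reflX A i x) (reflX A i y) = pairing A x y.
Proof.
rewrite /reflX pairingBl pairingZl !pairingBr !pairingZr pairing_sroot A_diag.
by rewrite (pairingC x (sroot i)); ring.
Qed.

Lemma pairing_actX w x y : pairing A (actX A w x) (actX A w y) = pairing A x y.
Proof. by elim: w => //= a w IH; rewrite pairing_reflX IH. Qed.

Lemma actX_revK w x : actX A w (actX A (rev w) x) = x.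
Proof.
elim: w x => //= a w IH x.
by rewrite rev_cons /actX foldr_rcons -/(actX A _ _) -/(actX A _ _) IH reflXK.
Qed.

(* The word w ++ i :: rev w represents s_beta = w r_i w^-1 for beta = w(alpha_i). *)
Lemma actX_reflection w i g :
  actX A (w ++ i :: rev w) g =
  g - pairing A (actX A w (sroot i)) g *: actX A w (sroot i).
Proof.
rewrite /actX foldr_cat /= -/(actX A _ _) -/(actX A _ _).
by rewrite {1}/reflX actX_subZ actX_revK -(pairing_actX w (sroot i)) actX_revK.
Qed.

Lemma pairing_root x : is_root A x -> pairing A x x = 2.
Proof. by case=> w [i ->]; rewrite pairing_actX pairing_sroot A_diag. Qed.

Lemma root_neq0 x : is_root A x -> x != 0.
Proof.
move=> /pairing_root; apply: contra_eqN => /eqP ->.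
by rewrite -(scale0r 0) pairingZr mul0r.
Qed.

Lemma is_root_actX w x : is_root A x -> is_root A (actX A w x).
Proof. by case=> w' [i ->]; exists (w ++ w'), i; rewrite /actX foldr_cat. Qed.

End SymmetricCartan.

Lemma sqr_diff_eq0_const p (g : nat -> int) : \sum_(t < p) (g t.+1 - g t) ^+ 2 = 0 ->
  forall t, (t <= p)%N -> g t = g 0%N.
Proof.
elim: p => [|p IH] h t tp; first by move: tp; rewrite leqn0 => /eqP ->.
move: h; rewrite big_ord_recr /= => /eqP.
rewrite paddr_eq0 ?sqr_ge0 //; last by apply: sumr_ge0 => i _; rewrite sqr_ge0.
case/andP => /eqP hp /eqP hlast.
case: (leqP t p) => [|pt]; first exact: IH.
have -> : t = p.+1 by apply/eqP; rewrite eqn_leq tp pt.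
by rewrite -(IH hp p (leqnn p)); apply/eqP; rewrite -subr_eq0 -sqrf_eq0 hlast.
Qed.

Lemma sqr_diff_eq1_step p (g : nat -> int) :
  \sum_(t < p) (g t.+1 - g t) ^+ 2 = 1 -> g p = g 0%N - 1 ->
  exists l, [/\ (l < p)%N, (forall t, (t <= l)%N -> g t = g 0%N) &
     (forall t, (l < t)%N -> (t <= p)%N -> g t = g 0%N - 1)].
Proof.
elim: p g => [|p IH] g; first by rewrite big_ord0.
rewrite big_ord_recl /= => hsum hp.
have rest_ge0 : 0 <= \sum_(i < p) (g (bump 0 i).+1 - g (bump 0 i)) ^+ 2.
  by apply: sumr_ge0 => i _; rewrite sqr_ge0.
have [flat|step] := eqVneq (g 1%N - g 0%N) 0.
  have g10 : g 1%N = g 0%N by apply/eqP; rewrite -subr_eq0 flat.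
  move: hsum; rewrite flat expr0n /= add0r => hsum.
  have hp1 : g p.+1 = g 1%N - 1 by rewrite hp g10.
  have [l [lp before after]] := IH (fun t => g t.+1) hsum hp1.
  exists l.+1; split => //; first by case=> [|t] ? //=; rewrite before // g10.
  by case=> [|t] // ? ?; rewrite after // g10.
have first_sqr : 1 <= (g 1%N - g 0%N) ^+ 2.
  move: step; set d := _ - _ => /eqP d0; rewrite expr2.
  have : d <= -1 \/ 1 <= d by lia.
  by case=> hd; nia.
have rest0 : \sum_(i < p) (g (bump 0 i).+1 - g (bump 0 i)) ^+ 2 = 0.
  by move: hsum first_sqr rest_ge0; set S := \sum_(_ < _) _; lia.
have tail := sqr_diff_eq0_const (g := fun t => g t.+1) rest0.
have g10 : g 1%N = g 0%N - 1 by rewrite -hp (tail p (leqnn p)).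
exists 0%N; split => //; first by case.
by case=> [|t] // _ tp; rewrite (tail t tp) g10.
Qed.

Section AffineA.
Variable n : nat.
Hypothesis n_ge2 : (2 <= n)%N.
Local Notation N := n.+1.
Local Notation A := (affA n).

Lemma affA_sym i j : A i j = A j i.
Proof. by rewrite !mxE (eq_sym j i) orbC. Qed.

Lemma affA_diag i : A i i = 2.
Proof. by rewrite mxE eqxx. Qed.

Definition cyc (k t : nat) : 'I_N := inord ((k + t) %% N).

Lemma val_cyc k t : (cyc k t : nat) = ((k + t) %% N)%N.
Proof. by rewrite /cyc inordK // ltn_pmod. Qed.

Lemma cyc_eq k s t : (s < N)%N -> (t < N)%N -> (cyc k s == cyc k t) = (s == t).
Proof.
move=> sN tN; rewrite -val_eqE /= !val_cyc.
by have := eqn_modDl k s t N; rewrite /= !(modn_small sN) !(modn_small tN) => ->.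
Qed.

Lemma cyc0 (i : 'I_N) : cyc 0 i = i.
Proof. by apply: val_inj; rewrite /= val_cyc add0n modn_small. Qed.

Lemma cyc_addn0 (i : 'I_N) : cyc i 0 = i.
Proof. by apply: val_inj; rewrite /= val_cyc addn0 modn_small. Qed.

Lemma cycA k s t : cyc (cyc k s) t = cyc k (s + t).
Proof. by apply: val_inj; rewrite /= !val_cyc modnDml addnA. Qed.

Lemma cycDN k s : cyc k (s + N) = cyc k s.
Proof. by apply: val_inj; rewrite /= !val_cyc addnA modnDr. Qed.

Lemma cycN (i : 'I_N) : cyc i N = i.
Proof. by apply: val_inj; rewrite /= val_cyc modnDr modn_small. Qed.

Lemma cyc_surj (k j : 'I_N) : exists2 t, (t < N)%N & j = cyc k t.
Proof.
exists ((j + (N - k)) %% N)%N; first by rewrite ltn_pmod.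
apply: val_inj; rewrite /= val_cyc modnDmr addnCA subnKC ?modnDr ?modn_small //.
exact: ltnW.
Qed.

Lemma cyc_inj (k : 'I_N) : injective (fun t : 'I_N => cyc k t).
Proof. by move=> s t /eqP; rewrite cyc_eq // => /eqP /val_inj. Qed.

Definition cyc_succ (i : 'I_N) := cyc i 1.
Definition cyc_pred (i : 'I_N) := cyc i n.

Lemma cyc_succK : cancel cyc_succ cyc_pred.
Proof. by move=> i; rewrite /cyc_pred /cyc_succ cycA add1n cycN. Qed.

Lemma cyc_predK : cancel cyc_pred cyc_succ.
Proof. by move=> i; rewrite /cyc_pred /cyc_succ cycA addn1 cycN. Qed.

Lemma cyc_succ_inj : injective cyc_succ.
Proof. exact: can_inj cyc_succK. Qed.

Lemma cyc_succ_cyc k t : cyc_succ (cyc k t) = cyc k t.+1.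
Proof. by rewrite /cyc_succ cycA addn1. Qed.

Lemma affAE i j :
  A i j = (j == i)%:R * 2 - (j == cyc_succ i)%:R - (j == cyc_pred i)%:R.
Proof.
have succ_neq : (cyc_succ i == i) = false.
  by rewrite /cyc_succ -{2}(cyc_addn0 i) cyc_eq // ltnS ltnW.
have pred_neq : (cyc_pred i == i) = false.
  by rewrite /cyc_pred -{2}(cyc_addn0 i) cyc_eq //; case: (n) n_ge2.
have succ_pred : (cyc_succ i == cyc_pred i) = false.
  by rewrite /cyc_pred /cyc_succ cyc_eq //; case: (n) n_ge2 => // -[].
have e_succ : ((j : nat) == (i.+1 %% N)%N) = (j == cyc_succ i).
  by rewrite -val_eqE /= val_cyc addn1.
have e_pred : ((i : nat) == (j.+1 %% N)%N) = (j == cyc_pred i).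
  rewrite -(inj_eq cyc_succ_inj) cyc_predK -val_eqE /= val_cyc addn1.
  by rewrite eq_sym.
rewrite /affA mxE e_succ e_pred (eq_sym i j).
have [->|ji] /= := eqVneq j i.
  rewrite [i == cyc_succ i]eq_sym succ_neq [i == cyc_pred i]eq_sym pred_neq /=; ring.
have [->|_] /= := eqVneq j (cyc_succ i); first by rewrite succ_pred /=; ring.
by case: (j == cyc_pred i) => /=; ring.
Qed.

Lemma sum_delta (a : 'I_N) (F : 'I_N -> int) : \sum_j (j == a)%:R * F j = F a.
Proof.
rewrite (bigD1 a) //= big1 ?addr0; first by rewrite eqxx mul1r.
by move=> j /negbTE ->; rewrite mul0r.
Qed.

Lemma affA_row i (x : 'rV[int]_N) :
  \sum_j A i j * x 0 j = 2 * x 0 i - x 0 (cyc_succ i) - x 0 (cyc_pred i).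
Proof.
under eq_bigr => j _ do rewrite affAE !mulrBl -mulrA.
by rewrite !sumrB !sum_delta.
Qed.

Lemma sum_cyc (k : 'I_N) (F : 'I_N -> int) : \sum_(i < N) F (cyc k i) = \sum_i F i.
Proof. by rewrite [RHS](reindex_inj (cyc_inj (k := k))). Qed.

Lemma pairing_affA x :
  pairing A x x = \sum_i (x 0 (cyc_succ i) - x 0 i) ^+ 2.
Proof.
have pred_succ : \sum_i x 0 i * x 0 (cyc_pred i) = \sum_i x 0 i * x 0 (cyc_succ i).
  rewrite (reindex_inj cyc_succ_inj); apply: eq_bigr => i _.
  by rewrite cyc_succK mulrC.
have succ_sqr : \sum_i x 0 (cyc_succ i) ^+ 2 = \sum_i x 0 i ^+ 2.
  by rewrite [RHS](reindex_inj cyc_succ_inj).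
rewrite /pairing.
under eq_bigr => i _ do rewrite (eq_bigr _ (fun j _ => esym (mulrA _ _ _))) -mulr_sumr affA_row.
transitivity (\sum_i (x 0 i ^+ 2 + x 0 i ^+ 2 - x 0 i * x 0 (cyc_succ i)
                                            - x 0 i * x 0 (cyc_pred i))).
  by apply: eq_bigr => i _; ring.
rewrite !sumrB big_split /= pred_succ -{2}succ_sqr -big_split -!sumrB /=.
by apply: eq_bigr => i _; ring.
Qed.

Lemma pairing_affA_ge0 x : 0 <= pairing A x x.
Proof. by rewrite pairing_affA; apply: sumr_ge0 => i _; rewrite sqr_ge0. Qed.

Lemma pairing_affA_eq0 u : pairing A u u = 0 -> forall j j', u 0 j = u 0 j'.
Proof.
rewrite pairing_affA => u0.
have succ_eq i : u 0 (cyc_succ i) = u 0 i.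
  apply/eqP; rewrite -subr_eq0 -sqrf_eq0; apply/eqP.
  by apply: (psumr_eq0P _ u0) => // j _; rewrite sqr_ge0.
have cyc0_eq t : u 0 (cyc 0 t) = u 0 (cyc 0 0).
  by elim: t => // t IH; rewrite -cyc_succ_cyc succ_eq.
by move=> j j'; rewrite -(cyc0 j) -(cyc0 j') !cyc0_eq.
Qed.

Lemma exists_ascent x : pairing A x x = 2 -> exists a, x 0 (cyc_succ a) - x 0 a = 1.
Proof.
rewrite pairing_affA => x2.
pose d i := x 0 (cyc_succ i) - x 0 i.
have [a /eqP ascent|no_ascent] := pickP (fun a => d a == 1); first by exists a.
have d_le0 a : d a <= 0.
  have : d a ^+ 2 <= 2.
    by rewrite -x2 (bigD1 a) //= lerDl sumr_ge0 // => i _; rewrite sqr_ge0.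
  have := no_ascent a; rewrite /= => /eqP d_neq1 d_sqr.
  case: (lerP (d a) 0) => // d_gt0.
  have d_ge2 : 2 <= d a by lia.
  by move: d_sqr; rewrite expr2; nia.
have d_sum : \sum_i d i = 0.
  have succ_sum : \sum_i x 0 (cyc_succ i) = \sum_i x 0 i.
    by rewrite [RHS](reindex_inj cyc_succ_inj).
  by rewrite sumrB succ_sum subrr.
have d0 i : d i = 0.
  apply: oppr_inj; rewrite oppr0.
  apply: (psumr_eq0P (P := xpredT) (F := fun j => - d j)) => // [j _|].
    by rewrite oppr_ge0.
  by rewrite sumrN d_sum oppr0.
by move: x2; rewrite big1 // => i _; rewrite -/(d i) d0 expr0n.
Qed.

Definition cyc_interval (k l : nat) : 'rV[int]_N := \sum_(t < l.+1) sroot (cyc k t).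

Lemma cyc_intervalE k l j : cyc_interval k l 0 j = \sum_(t < l.+1) (j == cyc k t)%:R.
Proof. by rewrite summxE; apply: eq_bigr => t _; rewrite mxE eqxx. Qed.

Lemma cyc_interval_ge0 k l j : 0 <= cyc_interval k l 0 j.
Proof. by rewrite cyc_intervalE; apply: sumr_ge0 => t _; rewrite ler0n. Qed.

Lemma cyc_interval_cyc k l t : (l < N)%N -> (t < N)%N ->
  cyc_interval k l 0 (cyc k t) = (t <= l)%:R.
Proof.
move=> lN tN; rewrite cyc_intervalE.
have sN (s : 'I_l.+1) : (s < N)%N by apply: leq_trans (ltn_ord s) lN.
under eq_bigr => s _ do rewrite cyc_eq //.
have [tl|lt] := leqP t l.
  rewrite (bigD1 (Ordinal (tl : (t < l.+1)%N))) //= eqxx big1 ?addr0 //.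
  by move=> s; rewrite eq_sym -val_eqE /= => /negbTE ->.
rewrite big1 // => s _; case: eqP => // ts.
by move: (ltn_ord s); rewrite -ts ltnS leqNgt lt.
Qed.

Lemma leq_subn1E l : (l <= n - 1)%N = (l < n)%N.
Proof. by rewrite subn1 -ltnS prednK // ltnW. Qed.

Lemma cyc_interval_out k l : (l <= n - 1)%N -> cyc_interval k l 0 (cyc k n) = 0.
Proof.
rewrite leq_subn1E => ln; have lN : (l < N)%N := ltnW ln.
by rewrite cyc_interval_cyc // leqNgt ln.
Qed.

Lemma cyc_interval_root (k : 'I_N) l : (l <= n - 1)%N -> is_root A (cyc_interval k l).
Proof.
elim: l => [|l IH] ln; first by exists [::], (cyc k 0); rewrite /cyc_interval big_ord1.
have l2N : (l.+2 < N)%N by move: ln; rewrite leq_subn1E.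
have l1N : (l.+1 < N)%N := ltnW l2N.
have l0N : (l < N)%N := ltnW l1N.
have next_pair : pairing A (scoroot (cyc k l.+1)) (cyc_interval k l) = -1.
  rewrite pairing_srootl affA_row /cyc_pred !cyc_succ_cyc cycA addSnnS cycDN.
  by rewrite !cyc_interval_cyc // ltnn leqnn leqNgt leqnSn /= mulr0 subrr sub0r.
have -> : cyc_interval k l.+1 = reflX A (cyc k l.+1) (cyc_interval k l).
  rewrite /reflX next_pair /cyc_interval big_ord_recr /=.
  by apply/matrixP => a b; rewrite !mxE; ring.
exact: (is_root_actX [:: cyc k l.+1] (IH (ltnW ln))).
Qed.

Lemma pairing_affA_eq2 x : pairing A x x = 2 -> exists (k : 'I_N) (l : nat) (h : int),
  (l <= n - 1)%N /\ forall j, x 0 j = h + cyc_interval k l 0 j.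
Proof.
move=> x2; have [a ascent] := exists_ascent x2.
pose b := cyc_succ a; pose g t := x 0 (cyc b t).
have last_step : g N - g n = 1 by rewrite /g cycN /b /cyc_succ cycA add1n cycN.
have g_drop : g n = g 0%N - 1.
  by move: last_step; rewrite /g cycN cyc_addn0 => <-; rewrite opprB addrC subrK.
have g_sum : \sum_(t < n) (g t.+1 - g t) ^+ 2 = 1.
  have : \sum_(t < n) (g t.+1 - g t) ^+ 2 + (g N - g n) ^+ 2 = 2.
    rewrite -x2 pairing_affA -(sum_cyc b) big_ord_recr /=.
    by congr (_ + _); [apply: eq_bigr => t _|]; rewrite cyc_succ_cyc.
  by rewrite last_step expr1n; move: (\sum_(_ < _) _) => S; lia.
have [l [ln before after]] := sqr_diff_eq1_step g_sum g_drop.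
exists b, l, (g 0%N - 1); split; first by rewrite leq_subn1E.
move=> j; have [t tN ->] := cyc_surj b j.
have lN : (l < N)%N := ltnW ln.
rewrite cyc_interval_cyc // -/(g t).
have [tl|lt] := leqP t l; first by rewrite before //= subrK.
by rewrite after //= addr0.
Qed.

Lemma quantum_cyc_interval (k : 'I_N) l : (l <= n - 1)%N -> quantum A (cyc_interval k l).
Proof.
move=> ln; set beta := cyc_interval k l.
have beta2 := pairing_root affA_sym affA_diag (cyc_interval_root k ln).
have beta_out := cyc_interval_out k ln.
split; first by split; [exact: cyc_interval_root | exact: cyc_interval_ge0].
move=> w i beta_eq gamma [gamma_root gamma_ge0] [refl_root refl_le0] gamma_neq.
have gamma2 := pairing_root affA_sym affA_diag gamma_root.
rewrite (actY_scoroot affA_sym) -beta_eq.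
have refl_eq : actX A (w ++ i :: rev w) gamma = gamma - pairing A beta gamma *: beta.
  by rewrite (actX_reflection affA_sym affA_diag) -beta_eq.
have form : pairing A (gamma - beta) (gamma - beta) = 4 - 2 * pairing A beta gamma.
  by rewrite (pairingBB affA_sym) gamma2 beta2 (pairingC affA_sym gamma); ring.
move: refl_eq form; set c := pairing A beta gamma => refl_eq form.
have c_le2 : c <= 2 by have := pairing_affA_ge0 (gamma - beta); rewrite form; lia.
have c_ge1 : 1 <= c.
  case: (lerP 1 c) => // c_lt1; exfalso; move: (root_neq0 affA_sym affA_diag refl_root).
  apply/negP; rewrite negbK; apply/eqP/matrixP => a j; rewrite (ord1 a) [RHS]mxE.
  have := refl_le0 j; have := gamma_ge0 j; have := cyc_interval_ge0 k l j.
  rewrite refl_eq !mxE -/beta; move: (beta 0 j) (gamma 0 j) => y z; nia.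
have [c2|] := eqVneq c 2; last by lia.
exfalso; apply: gamma_neq.
have form0 : pairing A (gamma - beta) (gamma - beta) = 0 by rewrite form c2.
have diff_out : (gamma - beta) 0 (cyc k n) = 0.
  have := refl_le0 (cyc k n); have := gamma_ge0 (cyc k n).
  rewrite refl_eq c2 !mxE beta_out mulr0 !subr0 => ge0 le0.
  by apply/eqP; rewrite eq_le le0 ge0.
apply/matrixP => a j; rewrite (ord1 a); apply/eqP; rewrite -subr_eq0.
by have := pairing_affA_eq0 form0 j (cyc k n); rewrite diff_out !mxE => ->.
Qed.

Lemma cyc_interval_of_quantum beta : quantum A beta ->
  exists (k : 'I_N) (l : nat), (l <= n - 1)%N /\ beta = cyc_interval k l.
Proof.
move=> [[beta_root beta_ge0] beta_quantum]; have [w [i beta_eq]] := beta_root.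
have beta2 := pairing_root affA_sym affA_diag beta_root.
have [k [l [h [ln beta_coord]]]] := pairing_affA_eq2 beta2.
set J := cyc_interval k l in beta_coord *.
have J_out : J 0 (cyc k n) = 0 := cyc_interval_out k ln.
have h_ge0 : 0 <= h by have := beta_ge0 (cyc k n); rewrite beta_coord J_out addr0.
have [h0|h_neq0] := eqVneq h 0.
  exists k, l; split => //; apply/matrixP => a j.
  by rewrite (ord1 a) beta_coord h0 add0r.
exfalso.
have J2 := pairing_root affA_sym affA_diag (cyc_interval_root k ln).
have beta_J : pairing A beta J = 2.
  have : pairing A (beta - J) (beta - J) = 0.
    by rewrite pairing_affA big1 // => j _; rewrite !mxE !beta_coord; ring.
  by rewrite (pairingBB affA_sym) beta2 J2; lia.
have J_neq : J <> beta.
  move=> J_beta; move/eqP: h_neq0; apply.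
  by move: (beta_coord (cyc k n)); rewrite -J_beta J_out addr0.
have J_pos : pos_root A J by split; [exact: cyc_interval_root | exact: cyc_interval_ge0].
have refl_neg : neg_root A (actX A (w ++ i :: rev w) J).
  split; first exact: is_root_actX (cyc_interval_root k ln).
  move=> j; rewrite (actX_reflection affA_sym affA_diag) -beta_eq beta_J !mxE.
  rewrite beta_coord; have := cyc_interval_ge0 k l j; rewrite -/J.
  by move: (J 0 j) => z; lia.
have := beta_quantum w i beta_eq J J_pos refl_neg J_neq.
by rewrite (actY_scoroot affA_sym) -beta_eq beta_J.
Qed.

End AffineA.

Theorem proposition2p32 (n : nat) (hn : (2 <= n)%N) (beta : 'rV[int]_n.+1) :
  quantum (affA n) beta <->
  exists (k : 'I_n.+1) (l : nat),
    (l <= n - 1)%N /\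
    beta = \sum_(t < l.+1) sroot (inord ((k + t) %% n.+1) : 'I_n.+1).
Proof.
split; first exact: cyc_interval_of_quantum.
by move=> [k [l [ln ->]]]; exact: quantum_cyc_interval.
Qed.
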